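(* Let $q$ be a prime power and $\ell$ an odd prime dividing $q-1$. For an integer $n \ge 1$ let $N_q(n)$ denote the number of monic irreducible polynomials of degree $n$ in $\mathbb{F}_q[x]$. Then for every integer $t \ge 0$, $v_\ell(N_q(2^t\ell)) = v_\ell(q-1) - 1$.
   Context: For a prime $\ell$ and nonzero integer $n$, $v_\ell(n)$ is the exponent of the highest power of $\ell$ dividing $n$. *)

From HB Require Import structures.
From mathcomp Require Import all_boot all_order all_algebra all_field.
From mathcomp Require Import boolp.
Set Implicit Arguments. Unset Strict Implicit. Unset Printing Implicit Defensive.
Import GRing.Theory.
Local Open Scope ring_scope.

(* The monic polynomial of degree n whose lower coefficients are given by t:
   x^n + t_{n-1} x^{n-1} + ... + t_0.  Every monic polynomial of degree n
   arises from exactly one such tuple. *)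
Definition monic_of_tuple (F : finFieldType) (n : nat) (t : n.-tuple F)
  : {poly F} := 'X^n + \poly_(i < n) t`_i.

(* N_q(n): number of monic irreducible polynomials of degree n over F,
   where q = #|F|.  Irreducibility (a Prop in mathcomp) is turned into a
   boolean classically via boolp's asbool. *)
Definition Nirr (F : finFieldType) (n : nat) : nat :=
  #|[set t : n.-tuple F | `[< irreducible_poly (monic_of_tuple t) >] ]|.

(* The monic irreducible polynomials over F_q whose degree divides n are exactly the
   irreducible factors of the separable polynomial X^(q^n) - X, so comparing degrees
   gives q^n = sum_(d | n) d N_q(d).  Splitting the divisors of 2^t l according to
   whether l divides them yields l N_q(l) = q^l - q and, with a = q^(2^(t-1)) for t > 0,
   2^t l N_q(2^t l) = (a^l - a)(a^l + a - 1).  As a = 1 mod l, the second factor is prime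
   to l, and v_l(a^l - a) = v_l(a^(l-1) - 1) = v_l(a - 1) = v_l(q - 1) since l divides
   neither l - 1 nor 2^(t-1). *)

From HB Require Import structures.
From mathcomp Require Import all_boot all_order all_algebra all_field.
From mathcomp Require Import boolp fingroup cyclic zify.
Set Implicit Arguments. Unset Strict Implicit. Unset Printing Implicit Defensive.
Import GRing.Theory FinRing.Theory.

Lemma sum_nat_by_value (I : finType) (A : pred I) (f : I -> nat) (s : seq nat) :
  uniq s -> {in A, forall i, f i \in s} ->
  \sum_(i in A) f i = \sum_(d <- s) d * #|[pred i in A | f i == d]|.
Proof.
move=> uniq_s f_s.
transitivity (\sum_(i in A) \sum_(d <- s | d == f i) d).
  apply: eq_bigr => i /f_s fi_s.
  by rewrite -big_filter filter_pred1_uniq // big_seq1.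
rewrite (exchange_big_dep xpredT) //=; apply: eq_bigr => d _.
by rewrite mulnC -sum_nat_const; apply: eq_big => // i; rewrite !inE eq_sym.
Qed.

Local Open Scope ring_scope.

Lemma mulrn_card (V : finZmodType) (x : V) : x *+ #|V| = 0.
Proof. by rewrite -cardsT -zmodXgE (@expg_cardG _ (setT_group V)) ?inE. Qed.

Lemma pnat_card_pchar (F : finFieldType) : [pchar F].-nat #|F|.
Proof.
have [p p_pr pcharFp] := finPcharP F.
have -> : #|F| = (p ^ logn p #|F|)%N by exact: card_pprimeChar pcharFp.
by rewrite (eq_pnat _ (pcharf_eq pcharFp)) pnatX pnat_id.
Qed.

Lemma expf_card_exp (F : finFieldType) (x : F) m : x ^+ (#|F| ^ m) = x.
Proof. by elim: m => [|m IHm]; rewrite ?expr1 // expnS exprM expf_card IHm. Qed.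

Lemma size_XnsubX (R : nzRingType) m :
  (1 < m)%N -> size ('X^m - 'X : {poly R}) = m.+1.
Proof. by move=> m_gt1; rewrite size_polyDl ?size_polyXn // size_polyN size_polyX ltnS. Qed.

Lemma monic_XnsubX (R : nzRingType) m : (1 < m)%N -> 'X^m - 'X \is @monic R.
Proof.
move=> m_gt1; rewrite monicE lead_coefDl ?lead_coefXn //.
by rewrite size_polyXn size_polyN size_polyX ltnS.
Qed.

Lemma separable_XnsubX (R : idomainType) k :
  k%:R = 0 :> R -> separable_poly ('X^k - 'X : {poly R}).
Proof.
move=> k0; rewrite unlock derivB derivXn derivX -mulr_natr -polyC_natr k0 mulr0 sub0r.
by rewrite -[-1 : {poly R}](scaleN1r 1) coprimepZr ?oppr_eq0 ?oner_eq0 ?coprimep1.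
Qed.

Lemma card_leq_exp_id (R : finIdomainType) m :
  (1 < m)%N -> (forall x : R, x ^+ m = x) -> (#|R| <= m)%N.
Proof.
move=> m_gt1 xm_id.
rewrite cardE -ltnS -(size_XnsubX R m_gt1) max_poly_roots ?enum_uniq //.
  by rewrite -size_poly_eq0 size_XnsubX.
by apply/allP => x _; rewrite rootE !hornerE xm_id subrr.
Qed.

Section ExpPchar.
Variables (R : comNzRingType) (k : nat).
Hypothesis pchar_k : [pchar R].-nat k.

Definition exp_pchar (x : R) := x ^+ k.

Fact exp_pchar_is_nmod_morphism : nmod_morphism exp_pchar.
Proof.
split=> [|x y]; rewrite /exp_pchar; last exact: exprDn_pchar.
by rewrite expr0n; case/andP: pchar_k; case: k.
Qed.

Fact exp_pchar_is_monoid_morphism : monoid_morphism exp_pchar.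
Proof. by split=> [|x y]; rewrite /exp_pchar ?expr1n // exprMn. Qed.

HB.instance Definition _ :=
  GRing.isNmodMorphism.Build R R exp_pchar exp_pchar_is_nmod_morphism.
HB.instance Definition _ :=
  GRing.isMonoidMorphism.Build R R exp_pchar exp_pchar_is_monoid_morphism.

Definition exp_pchar_rmorphism : {rmorphism R -> R} := exp_pchar.

End ExpPchar.

Section QuotientField.
Variables (F : finFieldType) (h : {poly F}).
Hypothesis hI : monic_irreducible_poly h.
Local Notation q := #|F|.
Local Notation K := {poly %/ h with hI}.
Local Notation x := (in_qpoly h 'X : K).

Lemma dvdp_in_qfpolyE g : (h %| g) = (in_qpoly h g == 0 :> K).
Proof.
by rewrite -val_eqE /= (mk_monicE hI); apply: Pdiv.WeakIdomain.dvdpE.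
Qed.

Lemma in_qfpoly_horner g : in_qpoly h g = (map_poly (qpolyC h) g).[x] :> K.
Proof. by rewrite -in_qpoly_comp_horner comp_polyXr. Qed.

(* y |-> y ^+ q ^ m is a ring morphism fixing the constants, and y is a polynomial in x. *)
Lemma qfpoly_exp_fixed m : x ^+ (q ^ m) = x -> forall y : K, y ^+ (q ^ m) = y.
Proof.
move=> xqm y.
have pchar_qm : [pchar K].-nat (q ^ m)%N.
  by rewrite (eq_pnat _ (pchar_qpoly h)) pnatX pnat_card_pchar.
pose frob := exp_pchar_rmorphism pchar_qm.
have -> : y = in_qpoly h y :> K.
  by apply: val_inj; apply/esym/in_qpoly_small/size_mk_monic.
rewrite in_qfpoly_horner -[_ ^+ _]/(frob _) -horner_map -map_poly_comp /=.
rewrite [frob x]xqm; congr (_.[x]); apply: eq_map_poly => c /=.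
by rewrite /exp_pchar -rmorphXn /= expf_card_exp.
Qed.

Lemma dvdp_XqnX n : (0 < n)%N -> (h %| 'X^(q ^ n) - 'X) = ((size h).-1 %| n)%N.
Proof.
move=> n_gt0; set d := (size h).-1.
have cardK : #|K| = (q ^ d)%N by exact: card_qfpoly.
have d_gt0 : (0 < d)%N.
  by case: hI => [[h_gt1 _] _]; rewrite /d -ltnS prednK // ltnW.
have q_gt1 : (1 < q)%N := finNzRing_gt1 F.
rewrite dvdp_in_qfpolyE rmorphB /= rmorphXn /= subr_eq0.
apply/eqP/idP => [/qfpoly_exp_fixed xqn_id|/dvdnP [c ->]]; last first.
  by rewrite mulnC expnM -cardK; apply: (@expf_card_exp K).
(* Otherwise all of K, of order q ^ d, consists of roots of X^(q^r) - X for r = n %% d. *)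
apply: contraT; rewrite /dvdn -lt0n => r_gt0.
have xqr_id (y : K) : y ^+ (q ^ (n %% d)) = y.
  rewrite -[RHS](xqn_id y) [in RHS](divn_eq n d) expnD exprM -(mulnC d) expnM.
  by rewrite -cardK (@expf_card_exp K).
have qr_gt1 : (1 < q ^ (n %% d))%N by rewrite -(expn0 q) ltn_exp2l.
by have := card_leq_exp_id qr_gt1 xqr_id; rewrite cardK leq_exp2l // leqNgt ltn_pmod.
Qed.

End QuotientField.

Lemma size_prod_predn (R : idomainType) (I : finType) (P : pred I)
    (G : I -> {poly R}) :
  (forall i, P i -> G i != 0) ->
  size (\prod_(i | P i) G i) = ((\sum_(i | P i) (size (G i)).-1).+1)%N.
Proof.
move=> nzG; elim/big_rec2: _ => [|i d p /nzG nzGi IHp]; first by rewrite size_poly1.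
by rewrite size_mul // -?size_poly_eq0 IHp // addnS polySpred.
Qed.

Section MonicIrreducibleFactors.
Variable F : finFieldType.
Implicit Types p r : {poly F}.

Definition monic_irreducibleb p := (p \is monic) && irreducibleb p.

Lemma monic_irreducibleb_coprimep r1 r2 :
  monic_irreducibleb r1 -> monic_irreducibleb r2 -> r1 != r2 -> coprimep r1 r2.
Proof.
case/andP=> mon_r1 /irreducibleP irr_r1 /andP[mon_r2 /irreducibleP irr_r2] r12.
rewrite irreducible_poly_coprime //; apply: contra r12 => dvd_r12.
rewrite -eqp_monic //; apply: (irr_r2.2) dvd_r12.
by rewrite neq_ltn irr_r1.1 orbT.
Qed.

Lemma coprimep_monic_irreducible_prod r s :
  monic_irreducibleb r -> all monic_irreducibleb s -> r \notin s ->
  coprimep r (\prod_(r' <- s) r').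
Proof.
move=> mirr_r; elim: s => [|r' s IHs]; first by rewrite big_nil coprimep1.
rewrite inE negb_or => /andP[mirr_r' mirr_s] /andP[rr' r_s].
by rewrite big_cons coprimepMr monic_irreducibleb_coprimep ?IHs.
Qed.

Lemma prod_monic_irreducible_dvdp p s :
  uniq s -> all monic_irreducibleb s -> all (fun r => r %| p) s ->
  \prod_(r <- s) r %| p.
Proof.
elim: s => [|r s IHs]; first by rewrite big_nil dvd1p.
case/andP=> r_s uniq_s /andP[mirr_r mirr_s] /andP[r_p s_p].
by rewrite big_cons Gauss_dvdp ?coprimep_monic_irreducible_prod ?r_p ?IHs.
Qed.

Lemma irreducible_polyZ c p :
  c != 0 -> irreducible_poly p -> irreducible_poly (c *: p).
Proof.
move=> c_neq0 [p_gt1 irr_p]; split=> [|r r_neq1]; first by rewrite size_scale.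
rewrite dvdpZr // => /(irr_p _ r_neq1) r_p.
by rewrite (eqp_trans r_p) // eqp_sym eqp_scale.
Qed.

Lemma exists_monic_irreducible_dvdp p :
  (1 < size p)%N -> exists2 r, monic_irreducibleb r & r %| p.
Proof.
have [m] := ubnP (size p); elim: m p => // m IHm p /ltnSE size_p_le p_gt1.
have p_neq0 : p != 0 by rewrite -size_poly_gt0 ltnW.
have lc_p_neq0 : lead_coef p != 0 by rewrite lead_coef_eq0.
case: (boolP (irreducibleb p)) => [/irreducibleP irr_p | ].
  exists ((lead_coef p)^-1 *: p); last by rewrite dvdpZl ?invr_eq0.
  apply/andP; split; first by apply/monicP; rewrite lead_coefZ mulVf.
  by apply/irreducibleP/irreducible_polyZ; rewrite ?invr_eq0.
rewrite /irreducibleb p_gt1 negb_forall => /existsP[q].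
rewrite negb_imply -ltnNge -Pdiv.WeakIdomain.dvdpE => /andP[q_p q_gt1].
have size_q_lt : (size q < m)%N.
  by apply: leq_ltn_trans (size_npoly q) _; rewrite prednK // ltnW.
by have [r mirr_r r_q] := IHm q size_q_lt q_gt1; exists r; rewrite ?(dvdp_trans r_q).
Qed.

Lemma separable_prod_monic_irreducible_dvdp m p :
  p \is monic -> separable_poly p -> (size p <= m)%N ->
  \prod_(r : {poly_m F} | monic_irreducibleb r && (r %| p)) (r : {poly F}) = p.
Proof.
move=> mon_p sep_p size_p_le.
set Q := \prod_(r | _) _.
have mon_Q : Q \is monic by apply: monic_prod => r /andP[/andP[]].
have Q_p : Q %| p.
  rewrite /Q -big_filter -(big_map val xpredT id).
  apply: prod_monic_irreducible_dvdp.
  - by rewrite map_inj_uniq ?filter_uniq ?index_enum_uniq //; apply: val_inj.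
  - by apply/allP => x /mapP[r]; rewrite mem_filter => /andP[/andP[]] ? _ _ ->.
  - by apply/allP => x /mapP[r]; rewrite mem_filter => /andP[/andP[]] _ ? _ ->.
set R := p %/ Q.
have p_eq : p = R * Q by rewrite divpK.
(* An irreducible factor of the cofactor R would divide p twice. *)
have size_R_le1 : (size R <= 1)%N.
  rewrite leqNgt; apply/negP => /exists_monic_irreducible_dvdp[r mirr_r r_pQ].
  have r_p : r %| p by rewrite p_eq dvdp_mulr.
  have size_r_le : (size r <= m)%N.
    by rewrite (leq_trans _ size_p_le) // dvdp_leq ?monic_neq0.
  have r_Q : r %| Q.
    by rewrite /Q (bigD1 (npolyp m r)) /= npolypK ?mirr_r ?r_p ?dvdp_mulr.
  have /irreducibleP[r_gt1 _] := proj2 (andP mirr_r).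
  have := separable_nosquare (u := r) (k := 2) sep_p (ltnSn 1).
  by rewrite neq_ltn r_gt1 orbT p_eq expr2 dvdp_mul // => /(_ isT).
have lc_R : lead_coef R = 1.
  by have := congr1 lead_coef p_eq; rewrite lead_coefM (monicP mon_Q) (monicP mon_p) mulr1.
rewrite [RHS]p_eq; suff -> : R = 1 by rewrite mul1r.
rewrite (size1_polyC size_R_le1) -[R`_0]lead_coefC -(size1_polyC size_R_le1).
by rewrite lc_R polyC1.
Qed.

End MonicIrreducibleFactors.

Section MonicOfTuple.
Variable F : finFieldType.

Lemma coef_monic_of_tuple d (t : d.-tuple F) i :
  (monic_of_tuple t)`_i = if (i < d)%N then t`_i else (i == d)%:R.
Proof.
rewrite /monic_of_tuple coefD coefXn coef_poly.
by case: ltnP => [i_lt_d|]; rewrite ?(ltn_eqF i_lt_d) ?add0r ?addr0.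
Qed.

Lemma size_monic_of_tuple d (t : d.-tuple F) : size (monic_of_tuple t) = d.+1.
Proof. by rewrite size_polyDl ?size_polyXn // ltnS size_poly. Qed.

Lemma monic_monic_of_tuple d (t : d.-tuple F) : monic_of_tuple t \is monic.
Proof.
by apply/monicP; rewrite /lead_coef size_monic_of_tuple coef_monic_of_tuple ltnn eqxx.
Qed.

Lemma monic_of_tuple_inj d : injective (@monic_of_tuple F d).
Proof.
move=> t1 t2 t12; apply: eq_from_tnth => i.
have := congr1 (fun p : {poly F} => p`_i) t12.
by rewrite /= !coef_monic_of_tuple ltn_ord !(tnth_nth 0).
Qed.

Lemma monic_of_tuple_coefs d (p : {poly F}) :
  p \is monic -> size p = d.+1 -> monic_of_tuple [tuple p`_i | i < d] = p.
Proof.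
move=> /monicP lc_p size_p; apply/polyP => i; rewrite coef_monic_of_tuple.
case: ltnP => [i_lt_d|d_le_i].
  by rewrite (nth_map (Ordinal i_lt_d)) ?size_enum_ord // nth_enum_ord.
have [->|i_neq_d] := eqVneq i d; first by rewrite -lc_p /lead_coef size_p.
by rewrite nth_default // size_p ltn_neqAle eq_sym i_neq_d.
Qed.

Lemma card_monic_irreducible_npoly m d : (d < m)%N ->
  #|[pred r : {poly_m F} | monic_irreducibleb r && (size r == d.+1)]| = Nirr F d.
Proof.
move=> d_lt_m; pose phi (t : d.-tuple F) : {poly_m F} := npolyp m (monic_of_tuple t).
have phiE t : phi t = monic_of_tuple t :> {poly F}.
  by rewrite npolypK // size_monic_of_tuple.
have phi_inj : injective phi.
  by move=> t1 t2 /(congr1 val); rewrite /= !phiE => /monic_of_tuple_inj.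
rewrite /Nirr -(card_imset _ phi_inj); apply: eq_card => r; rewrite !inE.
apply/andP/imsetP => [[/andP[mon_r irr_r] /eqP size_r]|[t]].
  exists [tuple r`_i | i < d]; last first.
    by apply: val_inj; rewrite /= phiE monic_of_tuple_coefs.
  by rewrite inE monic_of_tuple_coefs //; apply/asboolP/irreducibleP.
rewrite inE => /asboolP/irreducibleP irr_t ->.
by rewrite /monic_irreducibleb phiE monic_monic_of_tuple irr_t size_monic_of_tuple.
Qed.

End MonicOfTuple.

Theorem sum_divisors_Nirr (F : finFieldType) n : (0 < n)%N ->
  (#|F| ^ n = \sum_(d <- divisors n) d * Nirr F d)%N.
Proof.
move=> n_gt0; set N := (#|F| ^ n)%N; set P : {poly F} := 'X^N - 'X.
have N_gt1 : (1 < N)%N by rewrite -(expn0 #|F|) ltn_exp2l ?finNzRing_gt1.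
have size_P : size P = N.+1 := size_XnsubX F N_gt1.
have sep_P : separable_poly P.
  by apply: separable_XnsubX; rewrite natrX mulrn_card expr0n gtn_eqF.
have dvd_P r : monic_irreducibleb r -> (r %| P) = ((size r).-1 %| n)%N.
  by case/andP=> mon_r /irreducibleP irr_r; apply: (dvdp_XqnX (irr_r, mon_r)).
pose A := [pred r : {poly_N.+1 F} | monic_irreducibleb r && (r %| P)].
have deg_sum : N = (\sum_(r in A) (size r).-1)%N.
  have := separable_prod_monic_irreducible_dvdp (monic_XnsubX F N_gt1) sep_P (eq_leq size_P).
  move=> prod_A; apply: succn_inj; rewrite -{1}size_P /P -{1}prod_A.
  by rewrite size_prod_predn // => r /andP[/andP[/monic_neq0]].
rewrite {1}deg_sum (sum_nat_by_value (divisors_uniq n)) => [|r /andP[mirr_r]].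
  apply: eq_big_seq => d; rewrite -dvdn_divisors // => d_n; congr (_ * _)%N.
  rewrite -(@card_monic_irreducible_npoly F N.+1 d); last first.
    by rewrite ltnS (leq_trans (dvdn_leq n_gt0 d_n)) // ltnW // ltn_expl ?finNzRing_gt1.
  apply: eq_card => r; rewrite !inE; case mirr_r : (monic_irreducibleb r) => //=.
  have /andP[/monic_neq0] := mirr_r; rewrite -size_poly_gt0 dvd_P //.
  by case: (size r) => //= k _ _; rewrite eqSS; case: eqP => [->|]; rewrite ?d_n ?andbF.
by rewrite dvd_P // -dvdn_divisors.
Qed.

Local Close Scope ring_scope.

Lemma perm_divisors_mul_prime m l : prime l -> ~~ (l %| m) ->
  perm_eq (divisors (m * l)) (divisors m ++ [seq d * l | d <- divisors m]).
Proof.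
move=> l_pr l_m; have m_gt0 : 0 < m by case: m l_m; rewrite ?dvdn0.
have l_gt0 := prime_gt0 l_pr.
have dl_m d : (d * l %| m) = false.
  by apply: contraNF l_m; apply: dvdn_trans; apply: dvdn_mull.
apply: uniq_perm; first exact: divisors_uniq.
  rewrite cat_uniq divisors_uniq map_inj_uniq ?divisors_uniq /=; last first.
    by move=> d1 d2 /eqP; rewrite eqn_pmul2r // => /eqP.
  rewrite andbT; apply/hasPn => _ /mapP[d _ ->].
  by rewrite -dvdn_divisors ?dl_m.
move=> d; rewrite mem_cat -!dvdn_divisors ?muln_gt0 ?m_gt0 //.
have [/dvdnP[e ->]|l_d] := boolP (l %| d).
  rewrite dl_m dvdn_pmul2r //=; apply/idP/mapP => [e_m|[e' e'_m /eqP]].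
    by exists e; rewrite // -dvdn_divisors.
  by rewrite eqn_pmul2r // => /eqP ->; rewrite dvdn_divisors.
rewrite Gauss_dvdl; last by rewrite coprime_sym prime_coprime.
by case: (d %| m) => //=; apply/esym/mapP => -[e _ d_el]; rewrite d_el dvdn_mull in l_d.
Qed.

Lemma perm_divisors_pfactor p t : prime p ->
  perm_eq (divisors (p ^ t)) [seq p ^ i | i <- iota 0 t.+1].
Proof.
move=> p_pr; apply: uniq_perm; first exact: divisors_uniq.
  by rewrite map_inj_uniq ?iota_uniq //; apply/expnI/prime_gt1.
move=> d; rewrite -dvdn_divisors ?expn_gt0 ?prime_gt0 //.
apply/dvdn_pfactor/mapP => // -[i]; first by exists i; rewrite // mem_iota ltnS.
by rewrite mem_iota ltnS; exists i.
Qed.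

Lemma sum_divisors_mul_prime (f : nat -> nat) m l : prime l -> ~~ (l %| m) ->
  \sum_(d <- divisors (m * l)) f d =
  \sum_(d <- divisors m) f d + \sum_(d <- divisors m) f (d * l).
Proof.
by move=> l_pr l_m; rewrite (perm_big _ (perm_divisors_mul_prime l_pr l_m)) big_cat big_map.
Qed.

Lemma sum_divisors_pfactor (f : nat -> nat) p t : prime p ->
  \sum_(d <- divisors (p ^ t)) f d = \sum_(0 <= i < t.+1) f (p ^ i).
Proof. by move=> p_pr; rewrite (perm_big _ (perm_divisors_pfactor t p_pr)) big_map. Qed.

Lemma expn_card_mul_prime (F : finFieldType) m l : prime l -> ~~ (l %| m) ->
  #|F| ^ (m * l) = #|F| ^ m + \sum_(d <- divisors m) d * l * Nirr F (d * l).
Proof.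
move=> l_pr l_m; have m_gt0 : 0 < m by case: m l_m; rewrite ?dvdn0.
have ml_gt0 : 0 < m * l by rewrite muln_gt0 m_gt0 prime_gt0.
by rewrite !sum_divisors_Nirr // sum_divisors_mul_prime.
Qed.

Lemma Nirr_prime (F : finFieldType) l : prime l -> l * Nirr F l = #|F| ^ l - #|F|.
Proof.
move=> l_pr; have := @expn_card_mul_prime F 1 l l_pr.
rewrite dvdn1 neq_ltn prime_gt1 ?orbT // => /(_ isT).
have -> : divisors 1 = [:: 1] by [].
by rewrite big_seq1 !mul1n expn1 => ->; rewrite addKn.
Qed.

Lemma Nirr_pfactor_mul_prime (F : finFieldType) p l s : prime p -> prime l -> p != l ->
  #|F| ^ (p ^ s.+1 * l) + #|F| ^ p ^ s =
  #|F| ^ (p ^ s * l) + #|F| ^ p ^ s.+1 + p ^ s.+1 * l * Nirr F (p ^ s.+1 * l).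
Proof.
move=> p_pr l_pr p_l; have l_pX k : ~~ (l %| p ^ k).
  by rewrite -prime_coprime // coprimeXr // prime_coprime // dvdn_prime2 // eq_sym.
rewrite !expn_card_mul_prime // !sum_divisors_pfactor // big_nat_recr //=.
lia.
Qed.

Lemma sum_expn_mod p a k : 0 < a -> p %| a - 1 -> \sum_(i < k) a ^ i = k %[mod p].
Proof.
move=> a_gt0 p_a1; have a1 : a = 1 %[mod p] by apply/eqP; rewrite eqn_mod_dvd.
rewrite -modn_summ (eq_bigr (fun=> 1 %% p)) => [|i _]; last by rewrite -modnXm a1 modnXm exp1n.
by rewrite sum_nat_const card_ord modnMmr muln1.
Qed.

Lemma coprime_prime_gt0 l n : prime l -> coprime l n -> 0 < n.
Proof.
move=> l_pr; rewrite lt0n; apply: contraTneq => ->.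
by rewrite /coprime gcdn0 neq_ltn prime_gt1 ?orbT.
Qed.

Lemma logn_expn_sub1 p a k : prime p -> 1 < a -> p %| a - 1 -> ~~ (p %| k) ->
  logn p (a ^ k - 1) = logn p (a - 1).
Proof.
move=> p_pr a_gt1 p_a1 p_k; have k_gt0 : 0 < k by case: k p_k; rewrite ?dvdn0.
rewrite !subn1 predn_exp lognM; first last.
- by rewrite -(prednK k_gt0) big_ord_recl expn0.
- by rewrite -subn1 subn_gt0.
rewrite [X in _ + X]logn_coprime ?addn0 // prime_coprime //.
by rewrite /dvdn (sum_expn_mod _ (ltnW a_gt1) p_a1).
Qed.

Lemma coprime_dvdn_subn1 d a : 0 < a -> d %| a - 1 -> coprime d a.
Proof. by move=> a_gt0 /coprime_dvdl; apply; rewrite subn1 coprimePn. Qed.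

Lemma logn_expn_prime_sub l a : prime l -> 1 < a -> l %| a - 1 ->
  logn l (a ^ l - a) = logn l (a - 1).
Proof.
move=> l_pr a_gt1 l_a1; have l_gt0 := prime_gt0 l_pr.
have -> : a ^ l - a = a * (a ^ l.-1 - 1) by rewrite mulnBr muln1 -expnS prednK.
rewrite logn_Gauss ?coprime_dvdn_subn1 ?(ltnW a_gt1) // logn_expn_sub1 // gtnNdvd //.
  by rewrite -subn1 subn_gt0 prime_gt1.
by rewrite prednK.
Qed.

Lemma logn_eq_pred_of_expn_prime_sub l a c u n : prime l -> 1 < a -> l %| a - 1 ->
  coprime l c -> coprime l u -> c * l * n = (a ^ l - a) * u ->
  logn l n = (logn l (a - 1)).-1.
Proof.
move=> l_pr a_gt1 l_a1 l_c l_u eq_n.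
have al_gt0 : 0 < a ^ l - a by rewrite subn_gt0 -{1}(expn1 a) ltn_exp2l // prime_gt1.
have n_gt0 : 0 < n.
  have : 0 < (a ^ l - a) * u by rewrite muln_gt0 al_gt0 (coprime_prime_gt0 l_pr l_u).
  by rewrite -eq_n !muln_gt0 => /andP[].
move: eq_n; rewrite -mulnA (mulnC _ u) => /(congr1 (logn l)).
rewrite (logn_Gauss _ l_c) (logn_Gauss _ l_u).
rewrite (lognM _ (prime_gt0 l_pr) n_gt0) (logn_prime _ l_pr) eqxx.
by rewrite logn_expn_prime_sub // => <-.
Qed.

Lemma sqr_sub_factor a b x : 0 < a -> a <= b -> b ^ 2 + a = b + a ^ 2 + x ->
  x = (b - a) * (b + (a - 1)).
Proof. move=> a_gt0 /subnK <-; set y := b - a; nia. Qed.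

Lemma coprime_expnD_subn1 l a k : 0 < a -> l %| a - 1 -> coprime l (a ^ k + (a - 1)).
Proof.
move=> a_gt0 l_a1; rewrite -coprime_modr -modnDmr (eqP l_a1) addn0 coprime_modr.
by rewrite coprimeXr ?coprime_dvdn_subn1.
Qed.

Theorem lemma5p2 (F : finFieldType) (l : nat) :
  prime l -> odd l -> (l %| #|F| - 1)%N ->
  forall t : nat,
    logn l (Nirr F (2 ^ t * l)) = (logn l (#|F| - 1)).-1.
Proof.
move=> l_pr l_odd l_q1 [|s].
  apply: (@logn_eq_pred_of_expn_prime_sub _ _ 1 1); rewrite ?coprimen1 //.
    exact: finNzRing_gt1.
  by rewrite expn0 !mul1n muln1 Nirr_prime.
have l_2X k : coprime l (2 ^ k) by rewrite coprimeXr // coprimen2.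
have q_gt1 := finNzRing_gt1 F; set a := #|F| ^ 2 ^ s.
have a_gt1 : 1 < a by rewrite -(expn0 #|F|) ltn_exp2l // expn_gt0.
have l_a1 : l %| a - 1 by rewrite (dvdn_trans l_q1) // !subn1 dvdn_pred_predX.
rewrite -(logn_expn_sub1 (k := 2 ^ s) l_pr q_gt1 l_q1) -?prime_coprime // -/a.
apply: (@logn_eq_pred_of_expn_prime_sub _ _ (2 ^ s.+1) (a ^ l + (a - 1))) => //.
  by rewrite coprime_expnD_subn1 // ltnW.
apply: sqr_sub_factor; first exact: ltnW.
  by rewrite -{1}(expn1 a) leq_exp2l // prime_gt0.
have two_l : 2 != l by apply: contraTneq l_odd => <-.
have a_l : #|F| ^ (2 ^ s * l) = a ^ l by rewrite expnM.
have a_2l : #|F| ^ (2 ^ s.+1 * l) = (a ^ l) ^ 2.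
  by rewrite -!expnM expnS; congr (_ ^ _); lia.
have a_2 : #|F| ^ 2 ^ s.+1 = a ^ 2 by rewrite -expnM expnS mulnC.
have := Nirr_pfactor_mul_prime F s (isT : prime 2) l_pr two_l.
by rewrite a_2l a_l a_2 -/a => ->.
Qed.
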